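(* There exist constants $\varepsilon>0$ and $C>0$ such that for all positive integers $n$ and all integers $k$ with $\frac{n}{16}\le k\le\frac{n}{4}$, $g_k(n)\le C(2-\varepsilon)^n$.
   Context: $[n]_0=\{0,1,\dots,n\}$, $S_1+S_2=\{u+v:u\in S_1,v\in S_2\}$. For such $k$, $g_k(n)$ is the sum of $2^{-|(S_1+S_2)\cap[n]_0|}$ over all pairs $S_1,S_2\subseteq[n]_0$ with $0\in S_1\cap S_2$, $n+1\notin S_1+S_2$ and $n+1-k\notin S_1+S_2$. *)

From HB Require Import structures.
From mathcomp Require Import all_boot all_order all_algebra.
From mathcomp Require Import reals.
Set Implicit Arguments. Unset Strict Implicit. Unset Printing Implicit Defensive.
Import Order.TTheory GRing.Theory Num.Theory.

(* Subsets of [n]_0 = {0,...,n} are represented as {set 'I_n.+1}. *)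

Definition in_sumset (n : nat) (S1 S2 : {set 'I_n.+1}) (m : nat) : bool :=
  [exists u in S1, exists v in S2, (val u + val v == m)%N].

Definition sumset_card (n : nat) (S1 S2 : {set 'I_n.+1}) : nat :=
  #|[set m : 'I_n.+1 | in_sumset S1 S2 (val m)]|.

Local Open Scope ring_scope.

Definition g (R : realType) (k n : nat) : R :=
  \sum_(S1 : {set 'I_n.+1})
   \sum_(S2 : {set 'I_n.+1} |
          [&& (ord0 \in S1), (ord0 \in S2),
              ~~ in_sumset S1 S2 n.+1 &
              ~~ in_sumset S1 S2 (n.+1 - k)%N])
     (2%:R^-1) ^+ sumset_card S1 S2.

From HB Require Import structures.
From mathcomp Require Import all_boot all_order all_algebra.
From mathcomp Require Import reals.
From mathcomp Require Import ring lra zify.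
Import Order.TTheory GRing.Theory Num.Theory.
Set Implicit Arguments. Unset Strict Implicit. Unset Printing Implicit Defensive.

(* As 0 lies in both sets, S1 + S2 contains S1 :|: S2, so a pair (S1, S2) weighs at
   most the product over the sites x of 1/2 if x is in S1 :|: S2 and 1 otherwise.
   Pairing x with n + 1 - x gives rungs, and the rungs whose lower sites differ by k
   form ladders; as n/16 <= k <= n/4, each ladder has 4 to 16 rungs, and the ladders
   cover all but at most 32 sites.  The forbidden sums n + 1 and n + 1 - k only link
   sites of the same ladder, so on average over the 4^(n+1) pairs the ladders are
   independent, and a transfer-matrix computation bounds the average weight of a
   ladder with j rungs by (251/256) 4^-j.  The factor 4^-j alone would only give
   O(2^n); the extra factor 251/256, earned by at least (n - 32)/32 ladders, gives
   (2 - eps)^n. *)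

Lemma uniq_flatten_map_label (T L : eqType) (label : T -> L) (g : L -> seq T)
    (s : seq L) :
  uniq s -> {in s, forall l, uniq (g l)} ->
  {in s, forall l, {in g l, forall x, label x = l}} -> uniq (flatten (map g s)).
Proof.
elim: s => [|l s IH] //= /andP[ls Us] gU glab.
rewrite cat_uniq gU ?mem_head // IH //; last 2 first.
- by move=> l' l's; apply: gU; rewrite inE l's orbT.
- by move=> l' l's; apply: glab; rewrite inE l's orbT.
rewrite andbT; apply/hasP => -[x /flattenP[_ /mapP[l' l's ->] xl'] xl].
have xl_lab : label x = l by apply: glab; rewrite ?mem_head.
have xl'_lab : label x = l' by apply: glab; rewrite ?inE ?l's ?orbT.
by rewrite -xl_lab xl'_lab l's in ls.
Qed.

Lemma uniq_flatten_mem (T : eqType) (ss : seq (seq T)) s :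
  uniq (flatten ss) -> s \in ss -> uniq s.
Proof.
elim: ss => //= s' ss IH; rewrite cat_uniq inE => /and3P[Us' _ Uss] /orP[/eqP -> //|].
exact: IH.
Qed.

Definition rung_sites (T : Type) (L : seq (T * T)) : seq T :=
  flatten [seq [:: st.1; st.2] | st <- L].

Lemma rung_sites_cons (T : Type) (st : T * T) L :
  rung_sites (st :: L) = st.1 :: st.2 :: rung_sites L.
Proof. by []. Qed.

Lemma size_rung_sites (T : Type) (L : seq (T * T)) :
  size (rung_sites L) = (size L).*2.
Proof. by elim: L => [|st L IH] //; rewrite rung_sites_cons /= IH doubleS. Qed.

Lemma rung_sites_map (T U : Type) (f : T -> U) (L : seq (T * T)) :
  rung_sites [seq (f st.1, f st.2) | st <- L] = map f (rung_sites L).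
Proof. by rewrite /rung_sites map_flatten -!map_comp. Qed.

Lemma mem_rung_sites (T : eqType) (L : seq (T * T)) st : st \in L ->
  (st.1 \in rung_sites L) && (st.2 \in rung_sites L).
Proof.
by move=> stL; apply/andP; split; apply/flattenP; exists [:: st.1; st.2];
  rewrite ?map_f // !inE eqxx ?orbT.
Qed.

Lemma iota_succ_sorted m j : sorted (fun i i' => i' == i.+1) (iota m j).
Proof. by elim: j m => [|[|j] IH] m //=; rewrite eqxx; apply: IH. Qed.

Section LadderArithmetic.
Variables n k : nat.
Hypotheses (n_gt0 : 0 < n) (n_le16k : n <= 16 * k) (k4_le_n : 4 * k <= n).

(* The site y + 1 of [n]_0 is indexed by y < n, so that x <-> n + 1 - x reads
   y <-> n.-1 - y.  The ladder rooted at r < k has the rungs (y, n.-1 - y) with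
   y = r (mod k); their upper sites have the residue partner r. *)

Definition partner r := (n.-1 - r) %% k.
Definition rungs r := ((n.-1 - r) %/ k).+1.
Definition rung r i := (r + i * k, n.-1 - (r + i * k)).
Definition nat_ladder r := [seq rung r i | i <- iota 0 (rungs r)].
Definition ladder_roots := [seq r <- iota 0 k | r < partner r].
Definition self_partnered y := y %% k == partner (y %% k).

Lemma k_gt0 : 0 < k.
Proof. by case: k n_le16k n_gt0 => //; rewrite muln0 leqn0 => /eqP ->. Qed.

Lemma rungs_ge4 r : r < k -> 4 <= rungs r.
Proof. by move=> rk; rewrite ltnS leq_divRL ?k_gt0 //; lia. Qed.

Lemma rungs_le16 r : rungs r <= 16.
Proof. by rewrite ltnS -ltnS ltn_divLR ?k_gt0 //; lia. Qed.

Lemma rung_fst_le r i : r < k -> i < rungs r -> r + i * k <= n.-1.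
Proof.
move=> rk; rewrite ltnS leq_divRL ?k_gt0 // => ik.
by have := rungs_ge4 rk; lia.
Qed.

Lemma partner_lt r : partner r < k.
Proof. by rewrite ltn_mod k_gt0. Qed.

Lemma modn_subn_top y : y <= n.-1 -> (n.-1 - y) %% k = partner (y %% k).
Proof.
move=> yn; rewrite /partner.
have -> : n.-1 - y %% k = y %/ k * k + (n.-1 - y).
  by move: (divn_eq y k) yn; move: (y %/ k * k) (y %% k) => a b; lia.
by rewrite modnMDl.
Qed.

Lemma partnerK r : r < k -> partner (partner r) = r.
Proof.
move=> rk; have rn : r <= n.-1 by have := rungs_ge4 rk; lia.
by rewrite -modn_subn_top ?leq_subr // subKn // modn_small.
Qed.

Lemma rung_mod r i : r < k -> i < rungs r ->
  ((rung r i).1 %% k = r) * ((rung r i).2 %% k = partner r).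
Proof.
move=> rk ik; have fst_mod : (r + i * k) %% k = r by rewrite addnC modnMDl modn_small.
by split => //=; rewrite modn_subn_top ?fst_mod // rung_fst_le.
Qed.

Lemma rung_sum r i : r < k -> i < rungs r -> (rung r i).1 + (rung r i).2 = n.-1.
Proof. by move=> rk ik; rewrite /= subnKC ?rung_fst_le. Qed.

Lemma rung_of y : y <= n.-1 ->
  y %/ k < rungs (y %% k) /\ rung (y %% k) (y %/ k) = (y, n.-1 - y).
Proof.
move=> yn; rewrite /rung addnC -divn_eq; split => //.
by rewrite ltnS leq_divRL ?k_gt0 //; move: (divn_eq y k) yn; move: (y %/ k * k) => a; lia.
Qed.

Lemma mem_nat_ladderP r x : x \in rung_sites (nat_ladder r) ->
  exists2 i, i < rungs r & x = (rung r i).1 \/ x = (rung r i).2.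
Proof.
case/flattenP => _ /mapP[_ /mapP[i + ->] ->]; rewrite mem_iota => /andP[_ ir].
by rewrite !inE => /orP[] /eqP ->; exists i => //; [left | right].
Qed.

Lemma mem_nat_ladder y : y <= n.-1 ->
  (y \in rung_sites (nat_ladder (y %% k))) &&
  (n.-1 - y \in rung_sites (nat_ladder (y %% k))).
Proof.
case/rung_of => yr ry; apply: (mem_rung_sites (st := (y, n.-1 - y))).
by rewrite -ry; apply: map_f; rewrite mem_iota.
Qed.

Lemma nat_ladder_le r x : r < k -> x \in rung_sites (nat_ladder r) -> x <= n.-1.
Proof.
by move=> rk /mem_nat_ladderP[i ir [->|->]]; [apply: rung_fst_le | apply: leq_subr].
Qed.

Lemma mem_ladder_roots r : (r \in ladder_roots) = (r < k) && (r < partner r).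
Proof. by rewrite mem_filter mem_iota andbC. Qed.

Definition ladder_label y := minn (y %% k) (partner (y %% k)).

Lemma ladder_labelE r x : r \in ladder_roots ->
  x \in rung_sites (nat_ladder r) -> ladder_label x = r.
Proof.
rewrite mem_ladder_roots => /andP[rk rp] /mem_nat_ladderP[i ir [->|->]];
  rewrite /ladder_label !rung_mod //; first exact/minn_idPl/ltnW.
by rewrite partnerK //; apply/minn_idPr/ltnW.
Qed.

Lemma uniq_nat_ladder r : r \in ladder_roots -> uniq (rung_sites (nat_ladder r)).
Proof.
rewrite mem_ladder_roots => /andP[rk rp].
pose index_of y := if y %% k == r then y %/ k else (n.-1 - y) %/ k.
rewrite /rung_sites /nat_ladder -map_comp.
apply: (uniq_flatten_map_label (label := index_of)); first exact: iota_uniq.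
  move=> i; rewrite mem_iota => /andP[_ ir] /=; rewrite inE andbT.
  apply: contraTneq rp => /(congr1 (modn^~ k)).
  by rewrite !rung_mod // => <-; rewrite ltnn.
move=> i; rewrite mem_iota => /andP[_ ir] x /=; rewrite !inE.
have ri := rung_fst_le rk ir.
case/orP => /eqP ->; rewrite /index_of !rung_mod // ?eqxx ?(gtn_eqF rp) /=.
  by rewrite addnC divnMDl ?k_gt0 // divn_small // addn0.
by rewrite subKn // addnC divnMDl ?k_gt0 // divn_small // addn0.
Qed.

Definition nat_ladder_sites :=
  flatten [seq rung_sites (nat_ladder r) | r <- ladder_roots].

Lemma uniq_nat_ladder_sites : uniq nat_ladder_sites.
Proof.
apply: (uniq_flatten_map_label (label := ladder_label)
  (g := fun r => rung_sites (nat_ladder r))).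
- exact/filter_uniq/iota_uniq.
- by move=> r; apply: uniq_nat_ladder.
- by move=> r rR x; apply: ladder_labelE.
Qed.

Lemma nat_ladder_sites_le x : x \in nat_ladder_sites -> x <= n.-1.
Proof.
case/flattenP => _ /mapP[r + ->]; rewrite mem_ladder_roots => /andP[rk _].
exact: nat_ladder_le.
Qed.

Lemma mem_nat_ladder_sites y : y < n -> ~~ self_partnered y -> y \in nat_ladder_sites.
Proof.
move=> yn; have {}yn : y <= n.-1 by lia.
have yk : y %% k < k by rewrite ltn_mod k_gt0.
rewrite /self_partnered neq_ltn => /orP[lt|gt]; apply/flattenP.
  exists (rung_sites (nat_ladder (y %% k))); last by case/andP: (mem_nat_ladder yn).
  by apply: map_f; rewrite mem_ladder_roots yk.
have := mem_nat_ladder (leq_subr y n.-1).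
rewrite subKn // modn_subn_top // => /andP[_ yin].
exists (rung_sites (nat_ladder (partner (y %% k)))) => //.
by apply: map_f; rewrite mem_ladder_roots partner_lt partnerK.
Qed.

Lemma self_partnered_double y : y <= n.-1 -> self_partnered y -> (2 * y) %% k = n.-1 %% k.
Proof.
move=> yn /eqP sp.
have rn : y %% k <= n.-1 by have := leq_mod y k; lia.
rewrite -modnMmr mul2n -addnn {2}sp /partner modnDmr.
by congr (_ %% _); lia.
Qed.

Lemma count_self_partnered : count self_partnered (iota 0 n) <= 32.
Proof.
rewrite -size_filter -(size_map (fun y => (2 * y) %/ k)) -(size_iota 0 32).
have inS y : y \in [seq y <- iota 0 n | self_partnered y] ->
    (y <= n.-1) && self_partnered y.
  by rewrite mem_filter mem_iota andbC /= => /andP[yn ->]; lia.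
apply: uniq_leq_size.
  rewrite map_inj_in_uniq ?filter_uniq ?iota_uniq //.
  move=> y1 y2 /inS/andP[y1n s1] /inS/andP[y2n s2] /= eq_div.
  have := divn_eq (2 * y1) k.
  rewrite eq_div (self_partnered_double y1n s1) -(self_partnered_double y2n s2) -divn_eq.
  by move=> /eqP; rewrite eqn_pmul2l // => /eqP.
move=> _ /mapP[y /inS/andP[yn _] ->].
by rewrite mem_iota leq0n ltn_divLR ?k_gt0 //=; lia.
Qed.

Lemma size_nat_ladder_sites : n <= size nat_ladder_sites + 32.
Proof.
have cover : count (predC self_partnered) (iota 0 n) <= size nat_ladder_sites.
  rewrite -size_filter; apply: uniq_leq_size; first exact/filter_uniq/iota_uniq.
  move=> y; rewrite mem_filter mem_iota /= => /andP[ns yn].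
  exact: mem_nat_ladder_sites.
have := count_predC self_partnered (iota 0 n); rewrite size_iota.
by have := count_self_partnered; lia.
Qed.

Lemma nat_ladder_sums r : r < k ->
  all (fun st => st.1 + st.2 == n.-1) (nat_ladder r) &&
  sorted (fun st st' => st.1 + st'.2 + k == n.-1) (nat_ladder r).
Proof.
move=> rk; apply/andP; split.
  by apply/allP => _ /mapP[i + ->]; rewrite mem_iota => /andP[_ ir]; rewrite rung_sum.
rewrite sorted_map; apply: (sub_in_sorted (P := fun i => i < rungs r)
  (e := fun i i' => i' == i.+1)); last exact: iota_succ_sorted.
  move=> i _ _ /[swap] /eqP -> i1r; move: (rung_fst_le rk i1r); rewrite /= mulSnr.
  by move: (i * k) => ik; lia.
by apply/allP => i; rewrite mem_iota.
Qed.

End LadderArithmetic.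

Local Open Scope ring_scope.

Section PairAverage.
Variables (R : realType) (I : finType).

Definition subset_pair := ({set I} * {set I})%type.

Definition avg (F : subset_pair -> R) : R :=
  (\sum_(AB : subset_pair) F AB) / #|{: subset_pair}|%:R.

Definition depends_on (P : {set I}) (F : subset_pair -> R) :=
  forall AB AB' : subset_pair,
    AB.1 :&: P = AB'.1 :&: P -> AB.2 :&: P = AB'.2 :&: P -> F AB = F AB'.

Lemma card_subset_pair_neq0 : #|{: subset_pair}|%:R != 0 :> R.
Proof. by rewrite pnatr_eq0 -lt0n; apply/card_gt0P; exists (set0, set0). Qed.

Lemma sum_avg (F : subset_pair -> R) :
  \sum_(AB : subset_pair) F AB = #|{: subset_pair}|%:R * avg F.
Proof. by rewrite /avg mulrC mulfVK ?card_subset_pair_neq0. Qed.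

Lemma eq_avg (F G : subset_pair -> R) : F =1 G -> avg F = avg G.
Proof. by move=> FG; rewrite /avg; under eq_bigr do rewrite FG. Qed.

Lemma avgZ (a : R) (F : subset_pair -> R) : avg (fun AB => a * F AB) = a * avg F.
Proof. by rewrite /avg -big_distrr /= mulrA. Qed.

Lemma avg_sum (J : finType) (F : J -> subset_pair -> R) :
  avg (fun AB => \sum_(j : J) F j AB) = \sum_(j : J) avg (F j).
Proof. by rewrite /avg exchange_big /= big_distrl. Qed.

Lemma avg_ge0 (F : subset_pair -> R) : (forall AB, 0 <= F AB) -> 0 <= avg F.
Proof. by move=> F0; rewrite /avg mulr_ge0 ?invr_ge0 ?ler0n ?sumr_ge0. Qed.

Lemma avg_cst (c : R) : avg (fun _ => c) = c.
Proof.
have := card_subset_pair_neq0; rewrite /avg sumr_const -[c *+ _]mulr_natl.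
by move=> ?; rewrite mulrC mulKf.
Qed.

Lemma depends_onP (P : {set I}) (F : subset_pair -> R) :
  (forall AB AB' : subset_pair, {in P, AB.1 =i AB'.1} -> {in P, AB.2 =i AB'.2} ->
     F AB = F AB') -> depends_on P F.
Proof.
move=> FP AB AB' e1 e2; apply: FP => x xP.
  by move/setP: e1 => /(_ x); rewrite !inE xP !andbT.
by move/setP: e2 => /(_ x); rewrite !inE xP !andbT.
Qed.

Lemma depends_onM (P : {set I}) (F G : subset_pair -> R) :
  depends_on P F -> depends_on P G -> depends_on P (fun AB => F AB * G AB).
Proof. by move=> dF dG AB AB' e1 e2; rewrite (dF AB AB') ?(dG AB AB'). Qed.

Lemma depends_on_prod (P : {set I}) (T : eqType) (F : T -> subset_pair -> R) s :
  (forall x, x \in s -> depends_on P (F x)) ->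
  depends_on P (fun AB => \prod_(x <- s) F x AB).
Proof. by move=> dF AB AB' e1 e2; apply: eq_big_seq => x xs; apply: dF. Qed.

Definition splice (P X Y : {set I}) := (X :&: P) :|: (Y :\: P).

Lemma spliceK P X Y : splice P (splice P X Y) (splice P Y X) = X.
Proof.
by apply/setP => x; rewrite !inE; case: (x \in P); case: (x \in X); case: (x \in Y).
Qed.

Lemma splice_setI P X Y : splice P X Y :&: P = X :&: P.
Proof.
by apply/setP => x; rewrite !inE; case: (x \in P); case: (x \in X); case: (x \in Y).
Qed.

Lemma splice_setIC P X Y : splice P X Y :&: ~: P = Y :&: ~: P.
Proof.
by apply/setP => x; rewrite !inE; case: (x \in P); case: (x \in X); case: (x \in Y).
Qed.

(* Swapping the P-parts of two pairs is a bijection of pairs of pairs; it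
   identifies (sum F) * (sum G) with #|subset_pair| * sum (F * G). *)
Lemma avgM_indep (P : {set I}) (F G : subset_pair -> R) :
  depends_on P F -> depends_on (~: P) G ->
  avg (fun AB => F AB * G AB) = avg F * avg G.
Proof.
move=> dF dG.
pose swap (q : subset_pair * subset_pair) :=
  ((splice P q.1.1 q.2.1, splice P q.1.2 q.2.2),
   (splice P q.2.1 q.1.1, splice P q.2.2 q.1.2)).
have swapK : involutive swap by case=> [[? ?] [? ?]]; rewrite /swap /= !spliceK.
have sumFG : (\sum_AB F AB) * (\sum_AB G AB) =
             #|{: subset_pair}|%:R * \sum_AB (F AB * G AB).
  rewrite big_distrl /=; under eq_bigr do rewrite big_distrr /=.
  rewrite pair_bigA /= (reindex_inj (inv_inj swapK)) /=.
  under eq_bigr => q _.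
    rewrite (dF _ q.1) ?splice_setI // (dG _ q.1) ?splice_setIC //.
  over.
  rewrite -(pair_bigA _ (fun AB (_ : subset_pair) => F AB * G AB)) /=.
  under eq_bigr do rewrite sumr_const.
  by rewrite sumrMnl mulr_natl.
have := card_subset_pair_neq0; rewrite /avg mulrACA sumFG => ?.
by field.
Qed.

Lemma depends_on_sub (P Q : {set I}) (F : subset_pair -> R) :
  P \subset Q -> depends_on P F -> depends_on Q F.
Proof.
move=> /setIidPr PQ dF AB AB' e1 e2.
by apply: dF; rewrite -PQ !setIA ?e1 ?e2.
Qed.

Lemma avg_prod (T : eqType) (P : T -> {set I}) (F : T -> subset_pair -> R) s :
  (forall x, depends_on (P x) (F x)) ->
  pairwise (fun x y => [disjoint P x & P y]) s ->
  avg (fun AB => \prod_(x <- s) F x AB) = \prod_(x <- s) avg (F x).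
Proof.
move=> dF; elim: s => [_|x s IH /= /andP[xs ps]].
  by rewrite big_nil -[RHS](avg_cst 1); apply: eq_avg => AB; rewrite big_nil.
rewrite big_cons -IH // -(avgM_indep (P := P x)) //.
  by apply: eq_avg => AB; rewrite big_cons.
apply: depends_on_prod => y ys; apply: (depends_on_sub _ (dF y)).
by rewrite -disjoints_subset disjoint_sym (allP xs).
Qed.

Definition toggle (t : I) (A : {set I}) := if t \in A then A :\ t else t |: A.

Lemma toggleK t : involutive (toggle t).
Proof.
move=> A; rewrite /toggle; case: (boolP (t \in A)) => tA /=.
  by rewrite setD11 setD1K.
by rewrite setU11 setU1K.
Qed.

Lemma in_toggle t A : (t \in toggle t A) = ~~ (t \in A).
Proof. by rewrite /toggle; case: ifP => tA; rewrite !inE eqxx ?tA. Qed.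

Lemma sum_mem_eq t (b : bool) :
  \sum_(A : {set I}) ((t \in A) == b)%:R = #|{: {set I}}|%:R / 2 :> R.
Proof.
have flip : \sum_(A : {set I}) ((t \in A) == b)%:R =
            \sum_(A : {set I}) ((t \in A) == ~~ b)%:R :> R.
  rewrite (reindex_inj (inv_inj (toggleK t))) /=.
  by apply: eq_bigr => A _; rewrite in_toggle; case: b; case: (t \in A).
have total : \sum_(A : {set I}) ((t \in A) == b)%:R +
             \sum_(A : {set I}) ((t \in A) == ~~ b)%:R = #|{: {set I}}|%:R :> R.
  rewrite -big_split /= -sumr_const; apply: eq_bigr => A _.
  by case: (b); case: (t \in A); rewrite ?addr0 ?add0r.
by rewrite -flip in total; rewrite -total; lra.
Qed.

Lemma avg_mem_eq t (b1 b2 : bool) :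
  avg (fun AB => ((t \in AB.1) == b1)%:R * ((t \in AB.2) == b2)%:R) = 4^-1.
Proof.
rewrite /avg -(pair_bigA _ (fun A B : {set I} =>
  ((t \in A) == b1)%:R * ((t \in B) == b2)%:R)) /=.
under eq_bigr do rewrite -big_distrr /= sum_mem_eq.
rewrite -big_distrl /= sum_mem_eq card_prod natrM.
have : #|{: {set I}}|%:R != 0 :> R.
  by rewrite pnatr_eq0 -lt0n; apply/card_gt0P; exists set0.
by move=> ?; field.
Qed.

Lemma avg_point t (h : bool -> bool -> subset_pair -> R) :
  (forall b1 b2, depends_on (~: [set t]) (h b1 b2)) ->
  avg (fun AB => h (t \in AB.1) (t \in AB.2) AB) =
  4^-1 * \sum_(b1 : bool) \sum_(b2 : bool) avg (h b1 b2).
Proof.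
move=> dh.
have expand (AB : subset_pair) : h (t \in AB.1) (t \in AB.2) AB =
    \sum_(b1 : bool) \sum_(b2 : bool)
      (((t \in AB.1) == b1)%:R * ((t \in AB.2) == b2)%:R) * h b1 b2 AB.
  rewrite !big_bool /=; case: (t \in AB.1); case: (t \in AB.2);
  by rewrite /= ?(mulr1n, mulr0n, mul0r, mul1r, addr0, add0r).
rewrite (eq_avg expand) avg_sum big_distrr; apply: eq_bigr => b1 _.
rewrite avg_sum big_distrr; apply: eq_bigr => b2 _.
rewrite (avgM_indep (P := [set t])) ?avg_mem_eq //.
by apply: depends_onP => AB AB' e1 e2; rewrite e1 ?e2 // inE.
Qed.

End PairAverage.

Section LadderWeight.
Variables (R : realType) (I : finType).

Definition site_weight (b : bool) : R := if b then 2^-1 else 1.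

(* A rung is a pair (t, s) of sites with t + s = n + 1, whose lower site t is
   k above the lower site t' of the previous rung, so that t' + s = n + 1 - k.
   The state p records (t' \in S1, t' \in S2); the four tests forbid n + 1 and
   n + 1 - k in S1 + S2, and (false, false) is the state of a first rung. *)
Definition rung_weight (p : bool * bool) (ta tb sa sb : bool) : R :=
  if [&& ~~ (ta && sb), ~~ (sa && tb), ~~ (p.1 && sb) & ~~ (sa && p.2)]
  then site_weight (ta || tb) * site_weight (sa || sb) else 0.

Fixpoint ladder_weight (p : bool * bool) (L : seq (I * I))
    (AB : subset_pair I) : R :=
  if L is (t, s) :: L' then
    rung_weight p (t \in AB.1) (t \in AB.2) (s \in AB.1) (s \in AB.2) *
    ladder_weight (t \in AB.1, t \in AB.2) L' AB
  else 1.

Lemma site_weight_ge0 b : 0 <= site_weight b.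
Proof. by case: b => /=; lra. Qed.

Lemma rung_weight_ge0 p ta tb sa sb : 0 <= rung_weight p ta tb sa sb.
Proof. by rewrite /rung_weight; case: ifP => // _; rewrite mulr_ge0 ?site_weight_ge0. Qed.

Lemma ladder_weight_ge0 p L AB : 0 <= ladder_weight p L AB.
Proof.
by elim: L p => [|[t s] L IH] p /=; rewrite ?ler01 // mulr_ge0 ?rung_weight_ge0.
Qed.

Lemma depends_on_ladder_weight p L :
  depends_on [set x | x \in rung_sites L] (ladder_weight p L).
Proof.
elim: L p => [|[t s] L IH] p /=; first by [].
apply: depends_onP => AB AB' e1 e2.
have tL : t \in [set x | x \in t :: s :: rung_sites L] by rewrite inE mem_head.
have sL : s \in [set x | x \in t :: s :: rung_sites L] by rewrite !inE eqxx orbT.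
rewrite (e1 t) ?(e2 t) ?(e1 s) ?(e2 s) //; congr (_ * _).
apply: (IH _ AB AB'); apply/setP => x; rewrite !inE;
  case xL: (x \in rung_sites L); rewrite ?andbF ?andbT //;
  by [rewrite e1 // !inE xL !orbT | rewrite e2 // !inE xL !orbT].
Qed.

Lemma depends_on_ladder_weight_notin u p L : u \notin rung_sites L ->
  depends_on (~: [set u]) (ladder_weight p L).
Proof.
move=> uL; apply: (depends_on_sub (P := [set x | x \in rung_sites L])).
  by apply/subsetP => x; rewrite !inE; apply: contraTneq => ->.
exact: depends_on_ladder_weight.
Qed.

Lemma rung_weightE p ta tb sa sb :
  ~~ (ta && sb) -> ~~ (sa && tb) -> ~~ (p.1 && sb) -> ~~ (sa && p.2) ->
  rung_weight p ta tb sa sb = site_weight (ta || tb) * site_weight (sa || sb).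
Proof. by rewrite /rung_weight => -> -> -> ->. Qed.

Definition transfer (p c : bool * bool) : R :=
  \sum_(sa : bool) \sum_(sb : bool) rung_weight p c.1 c.2 sa sb.

Lemma avg_ladder_weight_cons p t s L : uniq (rung_sites ((t, s) :: L)) ->
  avg (ladder_weight p ((t, s) :: L)) =
  16^-1 * \sum_(c1 : bool) \sum_(c2 : bool)
            transfer p (c1, c2) * avg (ladder_weight (c1, c2) L).
Proof.
rewrite rung_sites_cons /= inE negb_or => /and3P[/andP[ts tL] sL _].
rewrite (avg_point (h := fun b1 b2 AB => rung_weight p b1 b2 (s \in AB.1) (s \in AB.2)
                                        * ladder_weight (b1, b2) L AB)); last first.
  move=> b1 b2; apply: depends_onM; last exact: depends_on_ladder_weight_notin.
  by apply: depends_onP => AB AB' e1 e2; rewrite e1 ?e2 // !inE eq_sym.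
rewrite (_ : 16^-1 = 4^-1 * 4^-1); last by lra.
rewrite -mulrA; congr (_ * _); rewrite big_distrr; apply: eq_bigr => c1 _.
rewrite big_distrr; apply: eq_bigr => c2 _.
rewrite (avg_point (h := fun b1 b2 AB => rung_weight p c1 c2 b1 b2
                                         * ladder_weight (c1, c2) L AB)); last first.
  move=> b1 b2 AB AB' e1 e2; congr (_ * _).
  exact: (depends_on_ladder_weight_notin (c1, c2) sL e1 e2).
congr (_ * _); rewrite /transfer big_distrl /=; apply: eq_bigr => b1 _.
by rewrite big_distrl; apply: eq_bigr => b2 _; rewrite avgZ.
Qed.

Definition bool2_vec (a b c d : R) (x : bool * bool) : R :=
  match x with
  | (false, false) => a | (false, true) => b | (true, false) => c | (true, true) => d
  end.

Definition transfer_table (p : bool * bool) : bool * bool -> R :=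
  match p with
  | (false, false) => bool2_vec (5/2) (3/4) (3/4) (1/2)
  | (false, true) => bool2_vec (3/2) (3/4) (1/2) (1/2)
  | (true, false) => bool2_vec (3/2) (1/2) (3/4) (1/2)
  | (true, true) => bool2_vec 1 (1/2) (1/2) (1/2)
  end.

Lemma transferE p c : transfer p c = transfer_table p c.
Proof.
case: p => [[] []]; case: c => [[] []];
  by rewrite /transfer !big_bool /rung_weight /=; lra.
Qed.

(* Upper bounds for the iterates of the transfer table on the all-ones vector:
   exact for j <= 3, and from then on the multiples of a vector that the table
   maps below 4 times itself. *)
Definition ladder_bound (j : nat) (c : bool * bool) : R :=
  match j with
  | 0 => 1
  | 1 => bool2_vec (9/2) (13/4) (13/4) (5/2) c
  | 2 => bool2_vec (139/8) (193/16) (193/16) 9 c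
  | 3 => bool2_vec (2113/32) (2921/64) (2921/64) (543/16) c
  | j'.+4 => bool2_vec 251 174 174 129 c * 4 ^+ j'
  end.

Lemma ladder_bound_step j p :
  \sum_(c1 : bool) \sum_(c2 : bool) transfer_table p (c1, c2) * ladder_bound j (c1, c2)
  <= ladder_bound j.+1 p.
Proof.
rewrite !big_bool /=.
case: j => [|[|[|[|j]]]]; case: p => [[] []] /=; try lra.
all: rewrite exprS; have : 0 <= (4 : R) ^+ j by rewrite exprn_ge0.
all: nra.
Qed.

Lemma avg_ladder_weight_le p L : uniq (rung_sites L) ->
  avg (ladder_weight p L) <= ladder_bound (size L) p / 16 ^+ size L.
Proof.
elim: L p => [|[t s] L IH] p U.
  by rewrite (_ : ladder_weight p [::] = fun=> 1) // avg_cst expr0 divr1.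
have UL : uniq (rung_sites L) by move: U; rewrite rung_sites_cons => /and3P[].
rewrite avg_ladder_weight_cons // [size _]/= exprS invfM mulrCA ler_pM2l ?invr_gt0 //.
rewrite ler_pdivlMr ?exprn_gt0 //.
apply: le_trans (ladder_bound_step _ _); rewrite big_distrl /=.
apply: ler_sum => c1 _; rewrite big_distrl /=; apply: ler_sum => c2 _.
rewrite transferE -mulrA ler_wpM2l //.
  by case: p {U IH} => [[] []]; case: c1; case: c2 => /=; lra.
by rewrite -ler_pdivlMr ?exprn_gt0 ?IH.
Qed.

Lemma avg_prod_ladder_weight p Ls :
  uniq (flatten [seq rung_sites L | L <- Ls]) ->
  avg (fun AB => \prod_(L <- Ls) ladder_weight p L AB) =
  \prod_(L <- Ls) avg (ladder_weight p L).
Proof.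
move=> U; apply: (avg_prod (P := fun L => [set x | x \in rung_sites L])).
  by move=> L; apply: depends_on_ladder_weight.
elim: Ls U => [|L Ls IH] //=; rewrite cat_uniq => /and3P[_ disj U].
rewrite IH // andbT; apply/allP => L' L'Ls; rewrite disjoints_subset.
apply/subsetP => x; rewrite !inE => xL; apply/negP => xL'.
case/hasP: disj; exists x => //.
by apply/flattenP; exists (rung_sites L'); rewrite ?map_f.
Qed.

End LadderWeight.

Lemma ler_prod_uniq_seq (R : numDomainType) (I : finType) (w : I -> R) (s : seq I) :
  (forall x, 0 <= w x <= 1) -> uniq s -> \prod_(x : I) w x <= \prod_(x <- s) w x.
Proof.
move=> w01 U; rewrite (big_uniq _ U) (bigID (mem s)) /=.
apply: ler_piMr; first by apply: prodr_ge0 => x _; case/andP: (w01 x).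
by apply: prodr_ile1 => x _; apply: w01.
Qed.

Section SumsetWeight.
Variables (R : realType) (n : nat).
Implicit Types (A B : {set 'I_n.+1}).

Lemma mem_sumset A B (u v : 'I_n.+1) : u \in A -> v \in B -> in_sumset A B (u + v).
Proof.
move=> uA vB; apply/existsP; exists u; rewrite uA /=.
by apply/existsP; exists v; rewrite vB /=.
Qed.

Lemma card_setU_le_sumset_card A B :
  ord0 \in A -> ord0 \in B -> (#|A :|: B| <= sumset_card A B)%N.
Proof.
move=> A0 B0; apply/subset_leq_card/subsetP => x; rewrite !inE => /orP[xS|xS].
  by have := mem_sumset xS B0; rewrite addn0.
exact: (mem_sumset A0 xS).
Qed.

Lemma prod_site_weight A B :
  \prod_(x : 'I_n.+1) site_weight R ((x \in A) || (x \in B)) = 2^-1 ^+ #|A :|: B|.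
Proof.
rewrite -prodr_const [RHS]big_mkcond /=; apply: eq_bigr => x _.
by rewrite !inE; case: (_ || _).
Qed.

Lemma ladder_weight_path A B N M (x : 'I_n.+1 * 'I_n.+1) L :
  ~~ in_sumset A B N -> ~~ in_sumset A B M ->
  all (fun st => val st.1 + val st.2 == N)%N L ->
  path (fun st st' => val st.1 + val st'.2 == M)%N x L ->
  ladder_weight R (x.1 \in A, x.1 \in B) L (A, B) =
  \prod_(z <- rung_sites L) site_weight R ((z \in A) || (z \in B)).
Proof.
move=> notN notM; elim: L x => [|[t s] L IH] x /=; first by rewrite big_nil.
case/andP => /eqP ts sumsL /andP[/eqP xs pathL].
rewrite rung_sites_cons !big_cons (IH (t, s)) // mulrA rung_weightE //.
- by apply: contra notN => /andP[tA sB]; rewrite -ts mem_sumset.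
- by apply: contra notN => /andP[sA tB]; rewrite -ts addnC mem_sumset.
- by apply: contra notM => /andP[xA sB]; rewrite -xs mem_sumset.
- by apply: contra notM => /andP[sA xB]; rewrite -xs addnC mem_sumset.
Qed.

Lemma ladder_weight_sorted A B N M L :
  ~~ in_sumset A B N -> ~~ in_sumset A B M ->
  all (fun st => val st.1 + val st.2 == N)%N L ->
  sorted (fun st st' => val st.1 + val st'.2 == M)%N L ->
  ladder_weight R (false, false) L (A, B) =
  \prod_(z <- rung_sites L) site_weight R ((z \in A) || (z \in B)).
Proof.
case: L => [|[t s] L] notN notM; first by rewrite big_nil.
move=> /= /andP[/eqP ts sumsL] pathL.
rewrite rung_sites_cons !big_cons (ladder_weight_path (x := (t, s)) notN notM) //.
rewrite mulrA rung_weightE ?andbF //.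
- by apply: contra notN => /andP[tA sB]; rewrite -ts mem_sumset.
- by apply: contra notN => /andP[sA tB]; rewrite -ts addnC mem_sumset.
Qed.

End SumsetWeight.

Section Ladders.
Variables (R : realType) (n k : nat).
Hypotheses (n_gt0 : (0 < n)%N) (n_le16k : (n <= 16 * k)%N) (k4_le_n : (4 * k <= n)%N).

Definition site (y : nat) : 'I_n.+1 := inord y.+1.

Lemma val_site y : (y <= n.-1)%N -> val (site y) = y.+1.
Proof. by move=> yn; apply: inordK; lia. Qed.

Definition ladder r := [seq (site st.1, site st.2) | st <- nat_ladder n k r].
Definition ladders := [seq ladder r | r <- ladder_roots n k].
Definition ladder_sites := flatten [seq rung_sites L | L <- ladders].

Lemma ladder_sitesE : ladder_sites = map site (nat_ladder_sites n k).
Proof.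
rewrite /ladder_sites /ladders -map_comp /nat_ladder_sites map_flatten -map_comp.
by congr flatten; apply: eq_map => r /=; rewrite rung_sites_map.
Qed.

Lemma uniq_ladder_sites : uniq ladder_sites.
Proof.
rewrite ladder_sitesE map_inj_in_uniq ?uniq_nat_ladder_sites //.
move=> y1 y2 /(nat_ladder_sites_le n_gt0 n_le16k k4_le_n) y1n.
move=> /(nat_ladder_sites_le n_gt0 n_le16k k4_le_n) y2n /(congr1 val).
by rewrite !val_site // => -[].
Qed.

Lemma size_ladder_sites : (n <= size ladder_sites + 32)%N.
Proof. by rewrite ladder_sitesE size_map size_nat_ladder_sites. Qed.

Lemma size_ladder r : r \in ladder_roots n k -> (4 <= size (ladder r) <= 16)%N.
Proof.
rewrite mem_ladder_roots => /andP[rk _].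
by rewrite !size_map size_iota rungs_ge4 ?rungs_le16.
Qed.

Lemma ladder_sums r : r \in ladder_roots n k ->
  all (fun st => val st.1 + val st.2 == n.+1)%N (ladder r) &&
  sorted (fun st st' => val st.1 + val st'.2 == n.+1 - k)%N (ladder r).
Proof.
rewrite mem_ladder_roots => /andP[rk _].
have le_top st : st \in nat_ladder n k r -> (st.1 <= n.-1)%N /\ (st.2 <= n.-1)%N.
  move/mem_rung_sites/andP => [st1_in st2_in].
  by split; apply: (nat_ladder_le n_gt0 n_le16k k4_le_n rk).
case/andP: (nat_ladder_sums n_gt0 n_le16k k4_le_n rk) => sums sorted_sums.
rewrite all_map sorted_map; apply/andP; split.
  apply/allP => st st_in /=; case: (le_top _ st_in) => le1 le2.
  by rewrite !val_site //; move: (allP sums _ st_in) => /= /eqP; lia.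
apply: (sub_in_sorted _ (allss (nat_ladder n k r)) sorted_sums).
move=> st st' st_in st'_in /= /eqP sum_eq.
case: (le_top _ st_in) (le_top _ st'_in) => le1 _ [_ le2].
by rewrite !val_site //; lia.
Qed.

Lemma weight_le_prod_ladder_weight (A B : {set 'I_n.+1}) :
  ord0 \in A -> ord0 \in B -> ~~ in_sumset A B n.+1 -> ~~ in_sumset A B (n.+1 - k) ->
  2^-1 ^+ sumset_card A B <= \prod_(L <- ladders) ladder_weight R (false, false) L (A, B).
Proof.
move=> A0 B0 notN notM.
apply: le_trans (_ : 2^-1 ^+ #|A :|: B| <= _).
  by apply: ler_wiXn2l; rewrite ?card_setU_le_sumset_card ?invr_ge0 ?invf_le1 ?ler1n.
rewrite -prod_site_weight.
apply: le_trans (ler_prod_uniq_seq _ uniq_ladder_sites) _.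
  by move=> x; rewrite /site_weight; case: (_ || _); lra.
rewrite /ladder_sites big_flatten big_map /= [leRHS](eq_big_seq
  (fun L => \prod_(z <- rung_sites L) site_weight R ((z \in A) || (z \in B)))) //.
move=> _ /mapP[r r_in ->]; case/andP: (ladder_sums r_in) => sums srt.
by rewrite (ladder_weight_sorted _ notN notM).
Qed.

Lemma g_le_sum_ladder_weight :
  g R k n <= \sum_(AB : subset_pair 'I_n.+1)
               \prod_(L <- ladders) ladder_weight R (false, false) L AB.
Proof.
apply: (@le_trans _ _ (\sum_(A : {set 'I_n.+1}) \sum_(B : {set 'I_n.+1})
    \prod_(L <- ladders) ladder_weight R (false, false) L (A, B))); last first.
  by rewrite pair_bigA; apply: ler_sum => -[A B] _.
apply: ler_sum => A _; rewrite big_mkcond /=; apply: ler_sum => B _.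
case: ifP => [/and4P[A0 B0 notN notM]|_]; first exact: weight_le_prod_ladder_weight.
by apply: prodr_ge0 => L _; apply: ladder_weight_ge0.
Qed.

End Ladders.

Section Estimate.
Variable R : realType.

Lemma bernoulli_ineq (d : R) m : 0 <= d <= 1 -> 1 - m%:R * d <= (1 - d) ^+ m.
Proof.
case/andP => d0 d1; elim: m => [|m IH]; first by rewrite expr0 mul0r subr0.
have : (1 - d) * (1 - m%:R * d) <= (1 - d) * (1 - d) ^+ m by rewrite ler_wpM2l ?subr_ge0.
have : 0 <= m%:R * d * d by rewrite !mulr_ge0 ?ler0n.
by rewrite exprS -natr1; nra.
Qed.

(* (1 - 2^-11) / 2, where (1 - 2^-11)^32 >= 251/256: the gain of one ladder pays
   for the factor 1 - 2^-11 on each of its at most 32 sites. *)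
Definition rho : R := 2047 / 4096.

Lemma ladder_bound_ff j : (4 <= j)%N ->
  ladder_bound R j (false, false) = 251 / 256 * 4 ^+ j.
Proof.
move=> j4; rewrite -(subnK j4) addn4 /= 4!exprS.
by field.
Qed.

Lemma ladder_bound_le_rho j : (4 <= j <= 16)%N ->
  ladder_bound R j (false, false) / 16 ^+ j <= rho ^+ j.*2.
Proof.
case/andP => j4 j16; rewrite ladder_bound_ff //.
have -> : rho ^+ j.*2 = (1 - 2048^-1) ^+ j.*2 / 4 ^+ j.
  rewrite (_ : rho = (1 - 2048^-1) / 2); last by rewrite /rho; lra.
  by rewrite expr_div_n -mul2n [2 ^+ _]exprM expr2 (_ : 2 * 2 = 4 :> R) //; lra.
have four_neq0 : 4 != 0 :> R by rewrite pnatr_eq0.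
rewrite (_ : 16 = 4 * 4 :> R) ?exprMn ?invfM ?mulrA ?mulfK ?expf_neq0 //; last by lra.
rewrite ler_pM2r ?invr_gt0 ?exprn_gt0 //.
apply: le_trans (bernoulli_ineq _ _); last by lra.
have : (j.*2)%:R <= 32 :> R by rewrite ler_nat; lia.
lra.
Qed.

Lemma avg_ladder_weight_le_rho (I : finType) (L : seq (I * I)) :
  uniq (rung_sites L) -> (4 <= size L <= 16)%N ->
  avg (ladder_weight R (false, false) L) <= rho ^+ size (rung_sites L).
Proof.
move=> U size_L; apply: le_trans (avg_ladder_weight_le R _ U) _.
by rewrite size_rung_sites; apply: ladder_bound_le_rho.
Qed.

Lemma card_subset_pair_ord n : #|{: subset_pair 'I_n.+1}|%:R = 4 ^+ n.+1 :> R.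
Proof.
rewrite card_prod -cardsT -powersetT card_powerset cardsT card_ord natrM natrX -exprMn.
by congr (_ ^+ _); lra.
Qed.

Lemma g_le n k : (0 < n)%N -> (n <= 16 * k)%N -> (4 * k <= n)%N ->
  g R k n <= 4 / rho ^+ 32 * (4 * rho) ^+ n.
Proof.
move=> n_gt0 n_le16k k4_le_n.
have U := uniq_ladder_sites n_gt0 n_le16k k4_le_n.
have rho_gt0 : 0 < rho by rewrite /rho; lra.
apply: le_trans (g_le_sum_ladder_weight R n_gt0 n_le16k k4_le_n) _.
rewrite sum_avg avg_prod_ladder_weight // card_subset_pair_ord.
have prod_le : \prod_(L <- ladders n k) avg (ladder_weight R (false, false) L)
               <= rho ^+ size (ladder_sites n k).
  rewrite /ladder_sites size_flatten sumnE !big_map -prodrXr big_seq [leRHS]big_seq.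
  apply: ler_prod => r r_in; apply/andP; split.
    by apply: avg_ge0 => AB; apply: ladder_weight_ge0.
  apply: avg_ladder_weight_le_rho; last exact: size_ladder.
  by apply: uniq_flatten_mem U _; rewrite map_f ?map_f.
have rho_le : rho ^+ size (ladder_sites n k) <= rho ^+ n / rho ^+ 32.
  rewrite ler_pdivlMr ?exprn_gt0 // -exprD.
  by apply: ler_wiXn2l; rewrite ?size_ladder_sites // /rho; lra.
apply: le_trans (ler_wpM2l _ (le_trans prod_le rho_le)) _; first by rewrite exprn_ge0.
rewrite [leRHS](_ : _ = 4 ^+ n.+1 * (rho ^+ n / rho ^+ 32)) //.
by rewrite [(4 * rho) ^+ n]exprMn [4 ^+ n.+1]exprS; ring.
Qed.

End Estimate.

Theorem mainTheorem15 (R : realType) :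
  exists (eps C : R), 0 < eps /\ 0 < C /\
    forall (n k : nat), (0 < n)%N -> (n <= 16 * k)%N -> (4 * k <= n)%N ->
      g R k n <= C * (2 - eps) ^+ n.
Proof.
have rho_gt0 : 0 < rho R by rewrite /rho; lra.
exists (1 / 1024), (4 / rho R ^+ 32); split; first by lra.
split; first by rewrite divr_gt0 ?exprn_gt0.
move=> n k n_gt0 n_le16k k4_le_n.
rewrite (_ : 2 - 1 / 1024 = 4 * rho R); last by rewrite /rho; lra.
exact: g_le.
Qed.
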